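(* Consider the directed $(m,h)$-CCN with a $1$-node passive adversary. In each of the following cases there is a protocol satisfying decodability and secrecy that achieves secrecy rate exactly $\frac{(h-1)^2}{h}$ (hence matching the outer bound $\frac{(h-1)^2}{h}$): (i) $h=2$ and any $m\ge 3$ (rate $\tfrac12$); (ii) $m=h+1$ for any $h\ge 2$; (iii) $h=3$ and $m\in\{4,5,6\}$ (rate $\tfrac43$).
   Context: Network model: a graph with unit-capacity edges; each use of an edge carries one symbol of a finite field $\mathbb{F}$, and entropies are measured in units of $\log|\mathbb{F}|$. A single source $S$ holds a message $\mathcal{W}$ to be multicast to a set of receivers. Each node may use its own private randomness; nodes share no prior common randomness and no side channel. An $N$-round protocol: in each round every edge is used at most once. Decodability: every receiver recovers $\mathcal{W}$ with zero error. Secrecy: $H(\mathcal{W}\mid \mathcal{V}_{\mathcal{A}})=H(\mathcal{W})$, where $\mathcal{V}_{\mathcal{A}}$ is the adversary's view over the whole protocol. The secrecy rate is $H(\mathcal{W})/N$; a rate is achievable if some protocol attains it. A $1$-node passive adversary may choose any single node other than the source and the receivers and observes all values delivered to that node; secrecy must hold for every such choice. Directed $(m,h)$-CCN ($m\ge h$): nodes $S$, $S_1,\dots,S_h$, $A_1,\dots,A_m$, $B_1,\dots,B_m$, and $\binom{m}{h}$ receivers, one per $h$-subset of $\{B_1,\dots,B_m\}$. Directed edges: $S\to S_i$ ($1\le i\le h$); $S_i\to A_i$ ($1\le i\le h$); $S_i\to A_j$ for all $1\le i\le h$, $h<j\le m$; $A_j\to B_j$ ($1\le j\le m$); $B_j\to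 R$ whenever $B_j$ is in the $h$-subset of receiver $R$. *)

From Stdlib Require Import Reals.
From HB Require Import structures.
From mathcomp Require Import all_boot all_algebra.

Set Implicit Arguments.
Unset Strict Implicit.
Unset Printing Implicit Defensive.

Definition is_distr (T : finType) (p : T -> R) : Prop :=
  (forall x, Rle R0 (p x)) /\ \big[Rplus/R0]_(x : T) p x = R1.

Definition law (Om T : finType) (p : Om -> R) (X : Om -> T) (x : T) : R :=
  \big[Rplus/R0]_(o : Om | X o == x) p o.

Definition logb (q : nat) (x : R) : R := Rdiv (ln x) (ln (INR q)).

(* Shannon entropy H(X) in units of log q (convention 0 log 0 = 0). *)
Definition entropy (q : nat) (Om T : finType) (p : Om -> R) (X : Om -> T) : R :=
  Ropp (\big[Rplus/R0]_(x : T) Rmult (law p X x) (logb q (law p X x))).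

Definition cond_entropy (q : nat) (Om T U : finType) (p : Om -> R)
  (X : Om -> T) (Y : Om -> U) : R :=
  Rminus (entropy q p (fun o => (X o, Y o))) (entropy q p Y).

(* Protocols on a directed graph (V, adj) with unit-capacity edges.
   An outcome is a pair (w, r) of the message w and the family r of
   private randomness of all nodes; the joint law is the product of the
   message law pW and the independent node laws pR v.
   A run of an N-round protocol is described by its transcript
   X o u v t : F = symbol carried by edge u -> v in round t on outcome o. *)

Definition outcome (Msg Rnd V : finType) := (Msg * {ffun V -> Rnd})%type.

Definition oprob (Msg Rnd V : finType) (pW : Msg -> R) (pR : V -> Rnd -> R)
  (o : outcome Msg Rnd V) : R :=
  Rmult (pW o.1) (\big[Rmult/R1]_(v : V) pR v (o.2 v)).

Definition causal (V : finType) (adj : rel V) (src : V) (Msg Rnd F : Type)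
  (N : nat) (X : Msg * {ffun V -> Rnd} -> V -> V -> 'I_N -> F) : Prop :=
  forall (u v : V) (t : 'I_N) (o o' : Msg * {ffun V -> Rnd}),
    adj u v ->
    o.2 u = o'.2 u ->
    (u = src -> o.1 = o'.1) ->
    (forall (u' : V) (t' : 'I_N), adj u' u -> (t' <= t)%N ->
        X o u' u t' = X o' u' u t') ->
    X o u v t = X o' u v t.

Definition view (V : finType) (adj : rel V) (Msg Rnd F : Type) (N : nat)
  (X : Msg * {ffun V -> Rnd} -> V -> V -> 'I_N -> F) (v : V)
  (o : Msg * {ffun V -> Rnd}) : {ffun V * 'I_N -> option F} :=
  [ffun p : V * 'I_N => if adj p.1 v then Some (X o p.1 v p.2) else None].

Definition secure_rate_achievable (V : finType) (adj : rel V) (src : V)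
  (isRcv isAdv : pred V) (rate : R) : Prop :=
  exists (F : finFieldType) (N : nat) (Msg Rnd : finType)
         (pW : Msg -> R) (pR : V -> Rnd -> R)
         (X : Msg * {ffun V -> Rnd} -> V -> V -> 'I_N -> F),
    let p := oprob pW pR in
    let W := fun o : outcome Msg Rnd V => o.1 in
    (0 < N)%N /\
        is_distr pW /\ (forall v, is_distr (pR v)) /\
        causal adj src X /\
        (forall v, isRcv v ->
           exists dec : Rnd -> {ffun V * 'I_N -> option F} -> Msg,
             forall o : outcome Msg Rnd V, Rlt R0 (p o) ->
               dec (o.2 v) (view adj X v o) = o.1) /\
        (forall a, isAdv a ->
           cond_entropy #|F| p W (view adj X a) = entropy #|F| p W) /\
        Rdiv (entropy #|F| p W) (INR N) = rate.

(* Nodes (0-based indices):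
     S                    = inl (inl (inl (inl tt)))
     S_i  (i : 'I_h)      = inl (inl (inl (inr i)))
     A_j  (j : 'I_m)      = inl (inl (inr j))
     B_j  (j : 'I_m)      = inl (inr j)
     R_X  (X h-subset of {B_1..B_m}, indexed by 'I_m) = inr X            *)

Definition ccn_node (m h : nat) : finType :=
  ((((unit + 'I_h) + 'I_m) + 'I_m) + {X : {set 'I_m} | #|X| == h})%type.

Definition ccn_src (m h : nat) : ccn_node m h := inl (inl (inl (inl tt))).

Definition ccn_adj (m h : nat) : rel (ccn_node m h) := fun u v =>
  match u, v with
  | inl (inl (inl (inl _))), inl (inl (inl (inr _))) => true
  | inl (inl (inl (inr i))), inl (inl (inr j)) =>
      (h <= j)%N || (nat_of_ord j == nat_of_ord i)
  | inl (inl (inr j)), inl (inr j') => j == j'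
  | inl (inr j), inr X => j \in sval X
  | _, _ => false
  end.

Definition ccn_rcv (m h : nat) : pred (ccn_node m h) := fun v =>
  match v with inr _ => true | _ => false end.

Definition ccn_adv (m h : nat) : pred (ccn_node m h) := fun v =>
  match v with
  | inl (inl (inl (inl _))) => false
  | inr _ => false
  | _ => true
  end.

Definition ccn_secure_rate_achievable (m h : nat) (rate : R) : Prop :=
  secure_rate_achievable (@ccn_adj m h) (ccn_src m h)
    (@ccn_rcv m h) (@ccn_adv m h) rate.

(* Write n = h - 1 and pick a prime p > m.  The message M is a uniform
   n x n matrix over F_p and the source draws a uniform key k in F_p^(n+1).
   In a single round S sends to S_i the masked vector x_i = k + offset_i(M)
   (offset_0 = 0; offset_(a+1) is row a of M preceded by minus the
   off-diagonal sum of column a).  For j <= n, A_j forwards x_j; for j > n,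
   A_j receives one coordinate code_j(i, x_i) from every S_i.  A vector of
   F_p^(n+1) is one symbol of the field F_(p^(n+1)), so the rate is
   n^2 log p / ((n+1) log p) = n^2/(n+1). *)

From Stdlib Require Import Reals Lra.
From HB Require Import structures.
From mathcomp Require Import all_boot all_algebra.
From mathcomp Require Import finfield ring zify.

Set Implicit Arguments.
Unset Strict Implicit.
Unset Printing Implicit Defensive.
Import GRing.Theory.

Lemma Radd_assoc : associative Rplus. Proof. by move=> *; rewrite Rplus_assoc. Qed.
Lemma Rmul_assoc : associative Rmult. Proof. by move=> *; rewrite Rmult_assoc. Qed.
HB.instance Definition _ :=
  Monoid.isComLaw.Build R R0 Rplus Radd_assoc Rplus_comm Rplus_0_l.
HB.instance Definition _ :=
  Monoid.isComLaw.Build R R1 Rmult Rmul_assoc Rmult_comm Rmult_1_l.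
Lemma Rmul0m : left_zero R0 Rmult. Proof. by move=> x; rewrite Rmult_0_l. Qed.
Lemma Rmulm0 : right_zero R0 Rmult. Proof. by move=> x; rewrite Rmult_0_r. Qed.
HB.instance Definition _ := Monoid.isMulLaw.Build R R0 Rmult Rmul0m Rmulm0.
Lemma RmulDl : left_distributive Rmult Rplus.
Proof. by move=> *; rewrite Rmult_plus_distr_r. Qed.
Lemma RmulDr : right_distributive Rmult Rplus.
Proof. by move=> *; rewrite Rmult_plus_distr_l. Qed.
HB.instance Definition _ := Monoid.isAddLaw.Build R Rmult Rplus RmulDl RmulDr.

Lemma Rsum_const (T : finType) (c : R) :
  \big[Rplus/R0]_(x : T) c = Rmult (INR #|T|) c.
Proof.
rewrite big_const; elim: #|T| => [|k IH]; first by rewrite /= Rmult_0_l.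
by rewrite S_INR -/(iter _ _ _) /= IH; lra.
Qed.

Lemma Rprod_const (T : finType) (c : R) : \big[Rmult/R1]_(x : T) c = pow c #|T|.
Proof. by rewrite big_const; elim: #|T| => [|k IH] //=; rewrite IH. Qed.

Lemma Rsum_ge0 (T : finType) (P : pred T) (f : T -> R) :
  (forall x, Rle R0 (f x)) -> Rle R0 (\big[Rplus/R0]_(x | P x) f x).
Proof.
by move=> f_ge0; elim/big_ind: _ => //; [exact: Rle_refl | move=> a b ? ?; lra].
Qed.

Lemma Rsum_pair (A B : finType) (f : A * B -> R) :
  \big[Rplus/R0]_(x : A * B) f x =
  \big[Rplus/R0]_(a : A) \big[Rplus/R0]_(b : B) f (a, b).
Proof. by rewrite pair_big; apply: eq_bigr; case. Qed.

Lemma INR_expn (a k : nat) : INR (a ^ k) = pow (INR a) k.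
Proof. by elim: k => [|k IH] //; rewrite expnS mult_INR IH. Qed.

Lemma INR_card_gt0 (T : finType) (x : T) : Rlt R0 (INR #|T|).
Proof. by apply: lt_0_INR; apply/ltP; apply/card_gt0P; exists x. Qed.

Definition unif (T : finType) (x : T) : R := Rinv (INR #|T|).

Lemma unif_distr (T : finType) (x0 : T) : is_distr (@unif T).
Proof.
have cardT_gt0 := INR_card_gt0 x0; split.
  by move=> x; apply: Rlt_le; apply: Rinv_0_lt_compat.
by rewrite /unif Rsum_const Rinv_r //; lra.
Qed.

Section Entropy.
Variables (Om : finType) (p : Om -> R) (q : nat).
Hypothesis p_ge0 : forall o, Rle R0 (p o).

Lemma law_mkcond (T : finType) (X : Om -> T) (x : T) :
  law p X x = \big[Rplus/R0]_o (if X o == x then p o else R0).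
Proof. by rewrite /law big_mkcond. Qed.

Lemma law_ge0 (T : finType) (X : Om -> T) (x : T) : Rle R0 (law p X x).
Proof. exact: Rsum_ge0. Qed.

Lemma law_total (T : finType) (X : Om -> T) :
  \big[Rplus/R0]_x law p X x = \big[Rplus/R0]_o p o.
Proof.
under eq_bigr do rewrite law_mkcond.
rewrite exchange_big /=; apply: eq_bigr => o _.
rewrite (bigD1 (X o)) //= eqxx big1 ?Rplus_0_r // => x /negPf.
by rewrite eq_sym => ->.
Qed.

Lemma law_marginal_r (T U : finType) (X : Om -> T) (Y : Om -> U) (y : U) :
  law p Y y = \big[Rplus/R0]_x law p (fun o => (X o, Y o)) (x, y).
Proof.
rewrite law_mkcond; under [RHS]eq_bigr do rewrite law_mkcond.
rewrite exchange_big /=; apply: eq_bigr => o _.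
rewrite (bigD1 (X o)) //= xpair_eqE eqxx /= big1 ?Rplus_0_r // => x /negPf.
by rewrite xpair_eqE eq_sym => ->.
Qed.

Lemma law_marginal_l (T U : finType) (X : Om -> T) (Y : Om -> U) (x : T) :
  law p X x = \big[Rplus/R0]_y law p (fun o => (X o, Y o)) (x, y).
Proof.
rewrite law_mkcond; under [RHS]eq_bigr do rewrite law_mkcond.
rewrite exchange_big /=; apply: eq_bigr => o _.
rewrite (bigD1 (Y o)) //= xpair_eqE eqxx andbT big1 ?Rplus_0_r // => y /negPf.
by rewrite xpair_eqE eq_sym => ->; rewrite andbF.
Qed.

Lemma xlogb_mul (a g : R) : Rlt R0 a -> Rle R0 g ->
  Rmult (Rmult a g) (logb q (Rmult a g)) =
  Rplus (Rmult a (Rmult g (logb q g))) (Rmult (Rmult a g) (logb q a)).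
Proof.
move=> a_gt0 /Rle_lt_or_eq_dec [g_gt0|<-]; last by rewrite !Rmult_0_r !Rmult_0_l; lra.
by rewrite /logb ln_mult // /Rdiv; lra.
Qed.

Lemma entropy_unif (T : finType) (X : Om -> T) (x0 : T) :
  (forall x, law p X x = Rinv (INR #|T|)) -> entropy q p X = logb q (INR #|T|).
Proof.
move=> lawX; rewrite /entropy (eq_bigr (fun _ => Rmult (Rinv (INR #|T|))
  (logb q (Rinv (INR #|T|))))); last by move=> x _; rewrite lawX.
have cardT_pos := INR_card_gt0 x0.
rewrite Rsum_const /logb ln_Rinv // /Rdiv -Rmult_assoc Rinv_r; lra.
Qed.

(* Writing g v for the common value of the joint
   law at (w, v), both H(W, V) and H(V) are expressed through g, and the
   identity reduces to H(W) = log |T| (W is then uniform). *)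
Lemma cond_entropy_invariant (T U : finType) (W : Om -> T) (V : Om -> U) (t0 : T) :
  \big[Rplus/R0]_o p o = R1 ->
  (forall w v, law p (fun o => (W o, V o)) (w, v) = law p (fun o => (W o, V o)) (t0, v)) ->
  cond_entropy q p W V = entropy q p W.
Proof.
move=> p_sum1 law_inv.
set g := fun v => law p (fun o => (W o, V o)) (t0, v).
set a := INR #|T|.
have a_gt0 : Rlt R0 a by apply: INR_card_gt0 t0.
have g_ge0 : forall v, Rle R0 (g v) by move=> v; apply: law_ge0.
have lawV : forall v, law p V v = Rmult a (g v).
  by move=> v; rewrite (law_marginal_r W) (eq_bigr (fun _ => g v)) ?Rsum_const.
set Sg := \big[Rplus/R0]_v g v.
have lawW : forall w, law p W w = Sg.
  by move=> w; rewrite (law_marginal_l W V); apply: eq_bigr => v _; rewrite law_inv.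
have aSg : Rmult a Sg = R1.
  rewrite -p_sum1 -(law_total V) /Sg big_distrr /=.
  by apply: eq_bigr => v _; rewrite lawV.
set Sgl := \big[Rplus/R0]_v Rmult (g v) (logb q (g v)).
have H_WV : entropy q p (fun o => (W o, V o)) = Ropp (Rmult a Sgl).
  rewrite /entropy Rsum_pair (eq_bigr (fun _ => Sgl)) ?Rsum_const //.
  by move=> w _; apply: eq_bigr => v _; rewrite law_inv.
have H_V : entropy q p V = Ropp (Rplus (Rmult a Sgl) (Rmult (Rmult a Sg) (logb q a))).
  rewrite /entropy; congr Ropp.
  under eq_bigr do rewrite lawV xlogb_mul //.
  by rewrite big_split /= -big_distrr -big_distrl -big_distrr.
have H_W : entropy q p W = logb q a.
  apply: (entropy_unif t0) => w; rewrite lawW.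
  by rewrite -[Sg]Rmult_1_l -(Rinv_l a); [rewrite Rmult_assoc aSg Rmult_1_r | lra].
by rewrite /cond_entropy H_WV H_V H_W aSg; lra.
Qed.
End Entropy.

Section UniformOutcome.
Variables (Msg Rnd V : finType) (w0 : Msg) (k0 : Rnd).
Local Notation Om := (Msg * {ffun V -> Rnd})%type.

Definition punif : Om -> R := oprob (@unif Msg) (fun _ : V => @unif Rnd).

Lemma card_outcome : #|{: Om}| = (#|Msg| * #|Rnd| ^ #|V|)%N.
Proof. by rewrite card_prod card_ffun. Qed.

Lemma punifE (o : Om) : punif o = Rinv (INR #|{: Om}|).
Proof.
rewrite /punif /oprob /unif Rprod_const card_outcome mult_INR INR_expn.
by rewrite pow_inv Rinv_mult.
Qed.

Lemma punif_distr : is_distr punif.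
Proof.
have card_gt0 := INR_card_gt0 ((w0, [ffun=> k0]) : Om).
split=> [o|]; first by rewrite punifE; apply: Rlt_le; apply: Rinv_0_lt_compat.
by rewrite (eq_bigr _ (fun o _ => punifE o)) Rsum_const Rinv_r //; lra.
Qed.

Lemma law_punif_pair (U : finType) (Y : Om -> U) (w : Msg) (y : U) :
  law punif (fun o => (o.1, Y o)) (w, y) =
  \big[Rplus/R0]_(r : {ffun V -> Rnd})
     (if Y (w, r) == y then Rinv (INR #|{: Om}|) else R0).
Proof.
rewrite law_mkcond Rsum_pair (bigD1 w) //= [X in Rplus _ X]big1 ?Rplus_0_r.
  by apply: eq_bigr => r _; rewrite xpair_eqE eqxx /= punifE.
by move=> w' /negPf w'w; apply: big1 => r _; rewrite xpair_eqE w'w.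
Qed.

Lemma law_punif_msg (w : Msg) : law punif fst w = Rinv (INR #|Msg|).
Proof.
have Rnd_gt0 := INR_card_gt0 (([ffun=> k0]) : {ffun V -> Rnd}).
have Msg_gt0 := INR_card_gt0 w.
have -> : law punif fst w = law punif (fun o => (o.1, tt)) (w, tt).
  by apply: eq_bigl => o; rewrite /= xpair_eqE andbT.
rewrite law_punif_pair (eq_bigr (fun _ => Rinv (INR #|{: Om}|))) //.
rewrite Rsum_const card_prod mult_INR Rinv_mult Rmult_comm Rmult_assoc Rinv_l; lra.
Qed.

Definition relabel (s : V) (tau : Rnd -> Rnd) (r : {ffun V -> Rnd}) : {ffun V -> Rnd} :=
  [ffun u => if u == s then tau (r u) else r u].

Lemma relabel_inj (s : V) (tau : Rnd -> Rnd) : injective tau -> injective (relabel s tau).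
Proof.
move=> tau_inj r1 r2 /ffunP E; apply/ffunP => u; have := E u; rewrite !ffunE.
by case: ifP => // _; apply: tau_inj.
Qed.

Lemma punif_secrecy (q : nat) (s : V) (U : finType) (Y : Om -> U) :
  (forall w, exists2 tau : Rnd -> Rnd, injective tau &
     forall r, Y (w0, relabel s tau r) = Y (w, r)) ->
  cond_entropy q punif fst Y = entropy q punif fst.
Proof.
move=> relabelY; have [p_ge0 p_sum1] := punif_distr.
apply: (cond_entropy_invariant q p_ge0 p_sum1 (t0 := w0)) => w y.
have [tau tau_inj Ytau] := relabelY w.
rewrite !law_punif_pair [RHS](reindex_inj (relabel_inj (s := s) tau_inj)).
by apply: eq_bigr => r _; rewrite Ytau.
Qed.
End UniformOutcome.

Lemma logb_expn (b d e : nat) : (1 < b)%N -> logb (b ^ d) (INR (b ^ e)) = Rdiv (INR e) (INR d).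
Proof.
move=> b_gt1; have b_pos : Rlt R0 (INR b) by apply: lt_0_INR; apply/ltP; lia.
have lnb_pos : Rlt R0 (ln (INR b)).
  have b_gt1' : Rlt R1 (INR b) by apply: lt_1_INR; apply/ltP.
  by have := ln_increasing R1 (INR b) Rlt_0_1 b_gt1'; rewrite ln_1.
rewrite /logb !INR_expn !ln_pow // /Rdiv Rinv_mult.
have -> : Rmult (Rmult (INR e) (ln (INR b))) (Rmult (Rinv (INR d)) (Rinv (ln (INR b)))) =
          Rmult (Rmult (INR e) (Rinv (INR d))) (Rmult (ln (INR b)) (Rinv (ln (INR b)))) by lra.
by rewrite Rinv_r ?Rmult_1_r //; lra.
Qed.

Section Protocol.
Variables (p n m : nat).
Local Notation vec := {ffun 'I_n.+1 -> 'F_p}.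
Local Notation Msg := {ffun 'I_n * 'I_n -> 'F_p}.

Definition offset (i : 'I_n.+1) (M : Msg) : vec :=
  [ffun c => match unlift ord0 i with
             | None => 0%R
             | Some a => match unlift ord0 c with
                         | Some b => M (a, b)
                         | None => (- \sum_(a' | a' != a) M (a', a))%R
                         end
             end].

Definition svec (i : 'I_n.+1) (M : Msg) (k : vec) : vec := (k + offset i M)%R.

Lemma svec_shift (i : 'I_n.+1) (M M' : Msg) (k : vec) :
  svec i M' (k + (offset i M - offset i M'))%R = svec i M k.
Proof. by rewrite /svec -addrA subrK. Qed.

Variable code : nat -> 'I_n.+1 -> vec -> 'F_p.

Definition share (j : 'I_m) (M : Msg) (k : vec) : vec :=
  if (j < n.+1)%N then svec (inord j) M k else [ffun i => code j i (svec i M k)].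

(* Each vector is carried as a single symbol of a field F with |F| = p^(n+1). *)
Variables (F : finType) (enc : vec -> F) (dec : F -> vec).
Hypothesis encK : cancel enc dec.
Local Notation V := (ccn_node m n.+1).
Local Notation Om := (Msg * {ffun V -> vec})%type.
Local Notation src := (ccn_src m n.+1).

Definition key (o : Om) : vec := o.2 src.
Definition symS (o : Om) (i : 'I_n.+1) : F := enc (svec i o.1 (key o)).
Definition fSA (i : 'I_n.+1) (j : 'I_m) (s : F) : F :=
  enc (if (j < n.+1)%N then dec s else [ffun _ => code j i (dec s)]).
Definition fA (j : 'I_m) (incoming : 'I_n.+1 -> F) : F :=
  enc (if (j < n.+1)%N then dec (incoming (inord j))
       else [ffun i => dec (incoming i) ord0]).
Definition symA (o : Om) (j : 'I_m) : F := fA j (fun i => fSA i j (symS o i)).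

Definition transcript (o : Om) (u v : V) (t : 'I_1) : F :=
  match u, v with
  | inl (inl (inl (inl _))), inl (inl (inl (inr i))) => symS o i
  | inl (inl (inl (inr i))), inl (inl (inr j)) => fSA i j (symS o i)
  | inl (inl (inr j)), inl (inr _) => symA o j
  | inl (inr j), inr _ => symA o j
  | _, _ => enc 0%R
  end.

Lemma symA_share (o : Om) (j : 'I_m) : symA o j = enc (share j o.1 (key o)).
Proof.
rewrite /symA /fA /share; case: ifP => hj; first by rewrite /fSA hj /symS !encK.
by congr enc; apply/ffunP => i; rewrite !ffunE /fSA hj /symS !encK ffunE.
Qed.

Lemma symA_local (o o' : Om) (j : 'I_m) :
  (forall i : 'I_n.+1, ((n.+1 <= j) || (nat_of_ord j == nat_of_ord i))%N ->
     fSA i j (symS o i) = fSA i j (symS o' i)) ->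
  symA o j = symA o' j.
Proof.
move=> same_in; rewrite /symA /fA; case: ifP => hj.
  by rewrite same_in // inordK // eqxx orbT.
by congr enc; apply/ffunP => i; rewrite !ffunE same_in // leqNgt hj.
Qed.

Lemma transcript_causal : causal (@ccn_adj m n.+1) src transcript.
Proof.
move=> u v t o o' uv same_rnd same_msg same_in.
case: u uv same_in same_rnd same_msg => [[[[[]|i]|j]|j]|R];
  case: v => [[[[[]|i']|j']|j']|R'] //= uv same_in same_rnd same_msg.
- by rewrite /symS /key same_msg // same_rnd.
- by have /= -> := same_in src t isT (leqnn t).
- apply: symA_local => i ij.
  by have /= -> := same_in (inl (inl (inl (inr i)))) t ij (leqnn t).
- by have /= -> // := same_in (inl (inl (inr j))) t _ (leqnn t); rewrite /= eqxx.
Qed.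

Hypothesis share_decodable : forall X : {set 'I_m}, #|X| = n.+1 ->
  exists D : {ffun 'I_m -> vec} -> Msg,
    forall M k, D [ffun j => if j \in X then share j M k else 0%R] = M.

Lemma receiver_decodes (v : V) : ccn_rcv v ->
  exists D : vec -> {ffun V * 'I_1 -> option F} -> Msg,
    forall o : Om, D (o.2 v) (view (@ccn_adj m n.+1) transcript v o) = o.1.
Proof.
case: v => [[[[[]|i]|j]|j]|R] //= _.
have [D DK] := share_decodable (eqP (svalP R)).
exists (fun _ obs => D [ffun j => if j \in sval R then
          (if obs (inl (inr j), ord0) is Some s then dec s else 0%R) else 0%R]).
move=> o; rewrite -[RHS](DK o.1 (key o)); congr D; apply/ffunP => j; rewrite !ffunE /=.
by case: ifP => // ->; rewrite symA_share encK.
Qed.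

Hypothesis code_secret : forall j : 'I_m, (n.+1 <= j)%N -> forall M M' : Msg,
  exists2 tau : vec -> vec, injective tau &
    forall k i, code j i (svec i M' (tau k)) = code j i (svec i M k).

Lemma key_relabel (tau : vec -> vec) (M : Msg) (r : {ffun V -> vec}) :
  key (M, relabel src tau r) = tau (r src).
Proof. by rewrite /key ffunE eqxx. Qed.

Lemma A_inputs_relabel (j : 'I_m) (M M' : Msg) :
  exists2 tau : vec -> vec, injective tau &
  forall r i, ((n.+1 <= j) || (nat_of_ord j == nat_of_ord i))%N ->
     fSA i j (symS (M', relabel src tau r) i) = fSA i j (symS (M, r) i).
Proof.
case: (ltnP j n.+1) => hj.
  exists (fun k => k + (offset (inord j) M - offset (inord j) M'))%R; first exact: addIr.
  move=> r i /= /eqP ji.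
  have -> : i = inord j by apply: val_inj; rewrite /= inordK.
  by rewrite /symS key_relabel svec_shift.
have [tau tau_inj tauK] := code_secret hj M M'.
exists tau => // r i _.
rewrite /fSA ltnNge hj /= /symS !encK key_relabel; congr enc; apply/ffunP => c.
by rewrite !ffunE tauK.
Qed.

Lemma adversary_relabel (a : V) : ccn_adv a -> forall M M' : Msg,
  exists2 tau : vec -> vec, injective tau &
  forall r, view (@ccn_adj m n.+1) transcript a (M', relabel src tau r) =
            view (@ccn_adj m n.+1) transcript a (M, r).
Proof.
case: a => [[[[[]|i]|j]|j]|R] //= _ M M'.
- exists (fun k => k + (offset i M - offset i M'))%R; first exact: addIr.
  move=> r; apply/ffunP => -[u t]; rewrite !ffunE.
  by case: u => [[[[[]|i']|j']|j']|R'] //=; rewrite /symS key_relabel svec_shift.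
- have [tau tau_inj tauK] := A_inputs_relabel j M M'; exists tau => // r.
  apply/ffunP => -[u t]; rewrite !ffunE.
  by case: u => [[[[[]|i']|j']|j']|R'] //=; case: ifP => // ij; rewrite tauK.
- have [tau tau_inj tauK] := A_inputs_relabel j M M'; exists tau => // r.
  apply/ffunP => -[u t]; rewrite !ffunE.
  case: u => [[[[[]|i']|j']|j']|R'] //=.
  by case: eqP => // ->; congr Some; apply: symA_local => i ij; apply: tauK.
Qed.
End Protocol.

(* Any sharing scheme whose coded shares are secret and whose (n+1)-subsets
   of shares determine the message yields secrecy rate n^2/(n+1): one round,
   one symbol of F_(p^(n+1)) per edge, and a uniform message of n^2 symbols
   of F_p. *)
Theorem sharing_rate_achievable (p n m : nat) (p_pr : prime p)
  (code : nat -> 'I_n.+1 -> {ffun 'I_n.+1 -> 'F_p} -> 'F_p)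
  (code_secret : forall j : 'I_m, (n.+1 <= j)%N -> forall M M' : {ffun 'I_n * 'I_n -> 'F_p},
    exists2 tau : {ffun 'I_n.+1 -> 'F_p} -> {ffun 'I_n.+1 -> 'F_p}, injective tau &
      forall k i, code j i (svec i M' (tau k)) = code j i (svec i M k))
  (share_decodable : forall X : {set 'I_m}, #|X| = n.+1 ->
    exists D : {ffun 'I_m -> {ffun 'I_n.+1 -> 'F_p}} -> {ffun 'I_n * 'I_n -> 'F_p},
      forall M k, D [ffun j => if j \in X then share code j M k else 0%R] = M) :
  ccn_secure_rate_achievable m n.+1 (Rdiv (INR (n ^ 2)) (INR n.+1)).
Proof.
have [F _ cardF] := pPrimePowerField p_pr (ltn0Sn n).
set vec := ({ffun 'I_n.+1 -> 'F_p}); set Msg := ({ffun 'I_n * 'I_n -> 'F_p}).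
have card_vec : #|{: vec}| = #|F| by rewrite card_ffun card_Fp // card_ord cardF.
pose enc (v : vec) : F := enum_val (cast_ord card_vec (enum_rank v)).
pose dec (f : F) : vec := enum_val (cast_ord (esym card_vec) (enum_rank f)).
have encK : cancel enc dec by move=> v; rewrite /enc /dec enum_valK cast_ordK enum_rankK.
exists F, 1%N, Msg, vec, (@unif Msg), (fun _ => @unif vec), (transcript code enc dec).
split=> //; split; first exact: unif_distr (0%R : Msg).
split; first by move=> v; exact: unif_distr (0%R : vec).
split; first exact: transcript_causal.
split.
  move=> v v_rcv; have [D DK] := receiver_decodes encK share_decodable v_rcv.
  by exists D => o _; apply: DK.
have H_msg : entropy #|F| (@punif Msg vec (ccn_node m n.+1)) fst = logb #|F| (INR #|{: Msg}|).
  exact: (entropy_unif _ (0%R : Msg) (law_punif_msg _ (0%R : vec))).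
split.
  move=> a a_adv; apply: (@punif_secrecy Msg vec _ 0%R 0%R _ (ccn_src m n.+1)) => w.
  exact: (adversary_relabel encK code_secret a_adv w 0%R).
rewrite H_msg cardF card_ffun card_Fp // card_prod card_ord logb_expn ?prime_gt1 //.
by rewrite mulnn /Rdiv Rinv_1 Rmult_1_r.
Qed.

Lemma card3_sorted (m : nat) (X : {set 'I_m}) : #|X| = 3 ->
  exists a b c : 'I_m, [/\ a < b, b < c & X = [set a; b; c]].
Proof.
move=> cardX; have /card_gt0P [x Xx] : 0 < #|X| by rewrite cardX.
have /cards2P [y [z [yz Xyz]]] : #|X :\ x| == 2.
  by have := cardsD1 x X; rewrite Xx cardX add1n => -[<-].
have : y \in X :\ x by rewrite Xyz !inE eqxx.
have : z \in X :\ x by rewrite Xyz !inE eqxx orbT.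
rewrite !in_setD1 => /andP [zx _] /andP [yx _].
have sort3 (a b c : 'I_m) : a < b -> b < c -> [set a; b; c] =i X ->
    exists a b c : 'I_m, [/\ a < b, b < c & X = [set a; b; c]].
  by move=> ab bc /setP E; exists a, b, c.
have X_E : X =i [set x; y; z].
  by move=> i; rewrite -(setD1K Xx) Xyz !inE orbA.
move: yz zx yx; rewrite -!(inj_eq val_inj) /= => yz zx yx.
case: (ltngtP x y) => h1; case: (ltngtP y z) => h2; case: (ltngtP x z) => h3;
  try (exfalso; lia);
  first [ apply: (sort3 _ _ _ h1 h2) | apply: (sort3 _ _ _ h2 h1) | apply: (sort3 _ _ _ h1 h3)
        | apply: (sort3 _ _ _ h3 h1) | apply: (sort3 _ _ _ h2 h3) | apply: (sort3 _ _ _ h3 h2) ];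
  by move=> i; rewrite X_E !inE; case: (i == x); case: (i == y); case: (i == z).
Qed.

Open Scope ring_scope.

Lemma Fp_nat_neq0 (p j : nat) : prime p -> (0 < j < p)%N -> (j%:R : 'F_p) != 0.
Proof.
move=> p_pr /andP [j_gt0 j_lt_p]; apply/eqP => j0.
by have := val_Fp_nat p_pr j; rewrite j0 modn_small //= => E; move: j_gt0; rewrite -E.
Qed.

Section SvecCoordinates.
Variables (p n : nat) (M : {ffun 'I_n * 'I_n -> 'F_p}) (k : {ffun 'I_n.+1 -> 'F_p}).
Local Notation l0 := (lift ord0).

Lemma svec0 (c : 'I_n.+1) : svec ord0 M k c = k c.
Proof. by rewrite !ffunE unlift_none addr0. Qed.

Lemma svecLL (a b : 'I_n) : svec (l0 a) M k (l0 b) = k (l0 b) + M (a, b).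
Proof. by rewrite !ffunE !liftK. Qed.

Lemma svecL0 (a : 'I_n) :
  svec (l0 a) M k ord0 = k ord0 - \sum_(a' | a' != a) M (a', a).
Proof. by rewrite !ffunE liftK unlift_none. Qed.
End SvecCoordinates.

Section Shares.
Variables (p n m : nat) (code : nat -> 'I_n.+1 -> {ffun 'I_n.+1 -> 'F_p} -> 'F_p).
Variables (j : 'I_m) (M : {ffun 'I_n * 'I_n -> 'F_p}) (k : {ffun 'I_n.+1 -> 'F_p}).

Lemma share_forward (i : 'I_n.+1) : nat_of_ord j = nat_of_ord i -> share code j M k = svec i M k.
Proof. by move=> ji; rewrite /share ji ltn_ord; congr svec; apply: val_inj; rewrite /= inordK. Qed.

Lemma share_coded (i : 'I_n.+1) : (n.+1 <= j)%N -> share code j M k i = code j i (svec i M k).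
Proof. by move=> hj; rewrite /share ltnNge hj ffunE. Qed.
End Shares.

Section DiagonalScheme.
Variables (p n : nat).
Local Notation vec := {ffun 'I_n.+1 -> 'F_p}.
Local Notation Msg := {ffun 'I_n * 'I_n -> 'F_p}.
Local Notation l0 := (lift ord0).

Definition diag_code (j : nat) (i : 'I_n.+1) (x : vec) : 'F_p := x i.

(* The diagonal coordinates x_i(i) are masked by the key coordinates k(i). *)
Lemma diag_code_secret (M M' : Msg) :
  exists2 tau : vec -> vec, injective tau &
    forall k i, diag_code 0 i (svec i M' (tau k)) = diag_code 0 i (svec i M k).
Proof.
exists (fun k => k + [ffun i => offset i M i - offset i M' i]); first exact: addIr.
by move=> k i; rewrite /diag_code !ffunE -addrA subrK.
Qed.

(* Without the diagonal share: M(a, b) = x_(a+1)(b+1) - x_0(b+1). *)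
Definition decode_rows (xs : 'I_n.+1 -> vec) : Msg :=
  [ffun ab => xs (l0 ab.1) (l0 ab.2) - xs ord0 (l0 ab.2)].

Lemma decode_rowsK (xs : 'I_n.+1 -> vec) M k :
  (forall i, xs i = svec i M k) -> decode_rows xs = M.
Proof.
move=> xsE; apply/ffunP => -[a b]; rewrite ffunE /= !xsE svecLL svec0.
by rewrite addrC addKr.
Qed.

(* Without x_0 = k: the differences x_(a+1)(b+1) - x_(b+1)(b+1) give
   M(a, b) - M(b, b), and the key coordinate y_0 = k 0 gives the column sum
   of M off the diagonal, hence (n-1) M(b, b). *)
Definition decode_no_key (xs : 'I_n.+1 -> vec) (y : vec) : Msg :=
  [ffun ab => (xs (l0 ab.1) (l0 ab.2) - xs (l0 ab.2) (l0 ab.2)) +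
    ((y ord0 - xs (l0 ab.2) ord0) -
      \sum_(a | a != ab.2) (xs (l0 a) (l0 ab.2) - xs (l0 ab.2) (l0 ab.2))) / (n.-1)%:R].

Lemma decode_no_keyK (xs : 'I_n.+1 -> vec) y M k : (n.-1)%:R != 0 :> 'F_p ->
  (forall a, xs (l0 a) = svec (l0 a) M k) -> y = [ffun i => svec i M k i] ->
  decode_no_key xs y = M.
Proof.
move=> n1_neq0 xsE yE; apply/ffunP => -[a b].
rewrite ffunE /= !xsE yE (ffunE (fun i => svec i M k i)) svec0 svecL0 !svecLL.
under eq_bigr => a' _ do rewrite xsE !svecLL.
have diffE a' : k (l0 b) + M (a', b) - (k (l0 b) + M (b, b)) = M (a', b) - M (b, b).
  by ring.
under eq_bigr => a' _ do rewrite diffE.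
have sum_const (c : 'F_p) : \sum_(a : 'I_n | a != b) c = c * (n.-1)%:R.
  rewrite (eq_bigl (fun a => a \in predC1 b)) ?sumr_const ?cardC1 ?card_ord ?mulr_natr //.
rewrite sumrB sum_const diffE; set S := \sum_(i | i != b) M (i, b).
have -> : k ord0 - (k ord0 - S) - (S - M (b, b) * (n.-1)%:R) = M (b, b) * (n.-1)%:R.
  by ring.
by rewrite mulfK // addrNK.
Qed.

(* Without x_(i+1): rows a <> i as before, M(i, i) from the diagonal share,
   and M(i, b) from the column sum x_0(0) - x_(b+1)(0). *)
Definition decode_no_row (i : 'I_n) (xs : 'I_n.+1 -> vec) (y : vec) : Msg :=
  [ffun ab => if ab.1 != i then xs (l0 ab.1) (l0 ab.2) - xs ord0 (l0 ab.2)
    else if ab.2 == i then y (l0 i) - xs ord0 (l0 i)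
    else (xs ord0 ord0 - xs (l0 ab.2) ord0) -
      \sum_(a | (a != ab.2) && (a != i)) (xs (l0 a) (l0 ab.2) - xs ord0 (l0 ab.2))].

Lemma decode_no_rowK (i : 'I_n) (xs : 'I_n.+1 -> vec) y M k :
  xs ord0 = svec ord0 M k -> (forall a, a != i -> xs (l0 a) = svec (l0 a) M k) ->
  y = [ffun i => svec i M k i] -> decode_no_row i xs y = M.
Proof.
move=> xs0 xsE yE; apply/ffunP => -[a b]; rewrite ffunE /=.
case: ifP => [ai|/negbFE/eqP ai]; first by rewrite xsE // xs0 svecLL svec0 addrC addKr.
subst i.
case: ifP => [/eqP ->|/negbT ba].
  by rewrite yE (ffunE (fun i => svec i M k i)) xs0 svec0 svecLL addrC addKr.
rewrite xs0 (xsE b ba) svec0 svecL0.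
under eq_bigr => a' /andP [_ a'a] do rewrite xsE // svecLL svec0 addrAC subrr add0r.
rewrite (bigD1 a) //=; last by rewrite eq_sym ba.
by set S := \sum_(i < n | _) _; ring.
Qed.

Lemma diag_decodable (X : {set 'I_n.+2}) : (n.-1)%:R != 0 :> 'F_p -> #|X| = n.+1 ->
  exists D : {ffun 'I_n.+2 -> vec} -> Msg,
    forall M k, D [ffun j => if j \in X then share diag_code j M k else 0] = M.
Proof.
move=> n1_neq0 cardX.
have [e Xe] : exists e, forall j, (j \in X) = (j != e).
  have /cards1P [e Ce] : #|~: X| == 1%N.
    by have := cardsC X; rewrite cardX card_ord => ?; apply/eqP; lia.
  by exists e => j; rewrite -[j \in X]negbK -in_setC Ce in_set1.
pose s M k : {ffun 'I_n.+2 -> vec} := [ffun j => if j \in X then share diag_code j M k else 0].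
rewrite -/s.
have forwarded (i : 'I_n.+1) M k : lift ord_max i != e -> s M k (lift ord_max i) = svec i M k.
  by move=> ie; rewrite ffunE Xe ie; apply: share_forward; rewrite /= /bump leqNgt ltn_ord.
have diagonal M k : ord_max != e -> s M k ord_max = [ffun i => svec i M k i].
  by move=> me; rewrite ffunE Xe me /=; apply/ffunP => i; rewrite share_coded // ffunE.
case: (unliftP ord_max e) => [e'|] De; last first.
  exists (fun s => decode_rows (fun i => s (lift ord_max i))) => M k.
  by apply: decode_rowsK => i; apply: forwarded; rewrite De eq_sym neq_lift.
case: (unliftP ord0 e') => [i|] De'.
- exists (fun s => decode_no_row i (fun i0 => s (lift ord_max i0)) (s ord_max)) => M k.
  apply: decode_no_rowK.
  + by apply: forwarded; rewrite De De' (inj_eq lift_inj) neq_lift.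
  + by move=> a ai; apply: forwarded; rewrite De De' !(inj_eq lift_inj).
  + by apply: diagonal; rewrite De neq_lift.
- exists (fun s => decode_no_key (fun i0 => s (lift ord_max i0)) (s ord_max)) => M k.
  apply: decode_no_keyK => //.
  + by move=> a; apply: forwarded; rewrite De De' (inj_eq lift_inj) eq_sym neq_lift.
  + by apply: diagonal; rewrite De neq_lift.
Qed.
End DiagonalScheme.


(* Scheme for h = 2 (n = 1) and any m < p: the message is one symbol M;
   x_0 = (k0, k1) and x_1 = (k0, k1 + M); node A_j, j >= 2, receives
   k1 + j k0 from S_0 and k1 + M from S_1. *)
Section PairScheme.
Variables (p : nat) (p_pr : prime p).
Local Notation vec := {ffun 'I_2 -> 'F_p}.
Local Notation Msg := {ffun 'I_1 * 'I_1 -> 'F_p}.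
Local Notation i1 := (lift ord0 (ord0 : 'I_1)).

Definition pair_code (j : nat) (i : 'I_2) (x : vec) : 'F_p :=
  if i == ord0 then x i1 + j%:R * x ord0 else x i1.

Lemma I2_cases (i : 'I_2) : i = ord0 \/ i = i1.
Proof. by case: (unliftP ord0 i) => [i'|] ->; [right; rewrite (ord1 i') | left]. Qed.

Lemma svec1_0 (M : Msg) (k : vec) : svec i1 M k ord0 = k ord0.
Proof. by rewrite svecL0 big_pred0 ?oppr0 ?addr0 // => a; rewrite (ord1 a) eqxx. Qed.

Lemma svec1_1 (M : Msg) (k : vec) : svec i1 M k i1 = k i1 + M (ord0, ord0).
Proof. exact: svecLL. Qed.

(* k1 + j k0 and k1 + M are unchanged when M is replaced by M' and the key
   is shifted by ((M' - M)/j, M - M'); here j is a unit since 1 < j < p. *)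
Lemma pair_code_secret (j : nat) : (1 < j < p)%N -> forall M M' : Msg,
  exists2 tau : vec -> vec, injective tau &
    forall k i, pair_code j i (svec i M' (tau k)) = pair_code j i (svec i M k).
Proof.
move=> /andP [j_gt1 j_lt_p] M M'.
have j_neq0 : (j%:R : 'F_p) != 0 by apply: Fp_nat_neq0 => //; rewrite j_lt_p andbT; lia.
exists (fun k => k + [ffun c => if c == ord0 then (M' (ord0, ord0) - M (ord0, ord0)) / j%:R
                                else M (ord0, ord0) - M' (ord0, ord0)]); first exact: addIr.
move=> k i; case: (I2_cases i) => ->; rewrite /pair_code /=.
  by rewrite !svec0 !ffunE /=; field.
by rewrite !svec1_1 !ffunE /=; ring.
Qed.

Definition pair_decode (a b : nat) (sa sb : vec) : 'F_p :=
  if a == 0%N then sb i1 - sa i1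
  else if a == 1%N then sb i1 - sb ord0 + b%:R * sa ord0
  else sa i1 - (sa ord0 - a%:R * ((sa ord0 - sb ord0) / (a%:R - b%:R))).

Lemma pair_decodeK (m : nat) (a b : 'I_m) (M : Msg) k : (m <= p)%N -> (a < b)%N ->
  pair_decode a b (share pair_code a M k) (share pair_code b M k) = M (ord0, ord0).
Proof.
move=> m_le_p ab; have b_lt_p : (b < p)%N by apply: leq_trans m_le_p.
case: a ab => [[|[|a]] a_lt] /= ab.
- rewrite (@share_forward p 1 m pair_code _ _ _ ord0) //.
  case: b ab b_lt_p => [[|[|b]] b_lt] //= ab b_lt_p.
    by rewrite (@share_forward p 1 m pair_code _ _ _ i1) // /pair_decode /= svec0 svec1_1; ring.
  by rewrite /pair_decode /= !share_coded // /pair_code /= ?svec0 ?svec1_0 ?svec1_1; ring.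
- rewrite (@share_forward p 1 m pair_code _ _ _ i1) //.
  case: b ab b_lt_p => [[|[|b]] b_lt] //= ab b_lt_p.
  by rewrite /pair_decode /= !share_coded // /pair_code /= ?svec0 ?svec1_0 ?svec1_1; ring.
- case: b ab b_lt_p => [[|[|b]] b_lt] //= ab b_lt_p.
  rewrite /pair_decode /= !share_coded // /pair_code /= !svec0.
  have ab_neq0 : (a.+2%:R - b.+2%:R : 'F_p) != 0.
    by rewrite -opprB -natrB ?oppr_eq0; [apply: Fp_nat_neq0 => //; lia | lia].
  by rewrite svec1_1; move: (a.+2%:R : 'F_p) (b.+2%:R : 'F_p) ab_neq0 => x y xy; field.
Qed.

Lemma pair_decodable (m : nat) (X : {set 'I_m}) : (m <= p)%N -> #|X| = 2%N ->
  exists D : {ffun 'I_m -> vec} -> Msg,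
    forall M k, D [ffun j => if j \in X then share pair_code j M k else 0] = M.
Proof.
move=> m_le_p /eqP /cards2P [a [b [ab ->]]].
wlog a_lt_b : a b ab / (a < b)%N.
  move=> base; case: (ltngtP a b) => [|ba|abE]; first exact: base.
    by rewrite setUC; apply: base; rewrite // eq_sym.
  by move: ab; rewrite -(inj_eq val_inj) /= abE eqxx.
exists (fun s => [ffun _ => pair_decode a b (s a) (s b)]) => M k.
apply/ffunP => -[x y]; rewrite (ord1 x) (ord1 y) !ffunE !inE !eqxx /= orbT.
exact: pair_decodeK.
Qed.
End PairScheme.


Section TripleScheme.
Variables (p : nat) (p_pr : prime p) (p_gt5 : (5 < p)%N).
Local Notation vec := {ffun 'I_3 -> 'F_p}.
Local Notation Msg := {ffun 'I_2 * 'I_2 -> 'F_p}.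
Local Notation o0 := (ord0 : 'I_2).
Local Notation o1 := (lift ord0 (ord0 : 'I_1)).
Local Notation c0 := (ord0 : 'I_3).
Local Notation c1 := (lift ord0 o0).
Local Notation c2 := (lift ord0 o1).

Lemma I3_cases (i : 'I_3) : [\/ i = c0, i = c1 | i = c2].
Proof.
case: (unliftP ord0 i) => [i'|] ->; last by constructor 1.
by case: (I2_cases i') => ->; [constructor 2 | constructor 3].
Qed.

Lemma sum_neq0 (f : 'I_2 -> 'F_p) : \sum_(a | a != o0) f a = f o1.
Proof. by rewrite (bigD1 o1) //= big_pred0 ?addr0 // => x; case: (I2_cases x) => ->. Qed.

Lemma sum_neq1 (f : 'I_2 -> 'F_p) : \sum_(a | a != o1) f a = f o0.
Proof. by rewrite (bigD1 o0) //= big_pred0 ?addr0 // => x; case: (I2_cases x) => ->. Qed.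

Section Coordinates.
Variables (M : Msg) (k : vec).
Lemma x00 c : svec c0 M k c = k c. Proof. exact: svec0. Qed.
Lemma x10 : svec c1 M k c0 = k c0 - M (o1, o0). Proof. by rewrite svecL0 sum_neq0. Qed.
Lemma x11 : svec c1 M k c1 = k c1 + M (o0, o0). Proof. exact: svecLL. Qed.
Lemma x12 : svec c1 M k c2 = k c2 + M (o0, o1). Proof. exact: svecLL. Qed.
Lemma x20 : svec c2 M k c0 = k c0 - M (o0, o1). Proof. by rewrite svecL0 sum_neq1. Qed.
Lemma x21 : svec c2 M k c1 = k c1 + M (o1, o0). Proof. exact: svecLL. Qed.
Lemma x22 : svec c2 M k c2 = k c2 + M (o1, o1). Proof. exact: svecLL. Qed.
End Coordinates.

Definition triple_code (j : nat) (i : 'I_3) (x : vec) : 'F_p :=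
  if j == 3%N then x i
  else if j == 4%N then
    (if i == c0 then x c1 + x c2 else if i == c1 then x c0 + x c1 else x c0 + x c2)
  else (if i == c0 then x c1 else if i == c1 then x c0 - x c1 + x c2 else x c0 - x c2).

Definition tshare (j : nat) (M : Msg) (k : vec) : vec :=
  if (j < 3)%N then svec (inord j) M k else [ffun i => triple_code j i (svec i M k)].

Lemma share_tshare (m : nat) (j : 'I_m) M k : share triple_code j M k = tshare j M k.
Proof. by []. Qed.

Lemma tshare0 M k : tshare 0 M k = svec c0 M k.
Proof. by rewrite /tshare /=; congr svec; apply: val_inj; rewrite /= inordK. Qed.
Lemma tshare1 M k : tshare 1 M k = svec c1 M k.
Proof. by rewrite /tshare /=; congr svec; apply: val_inj; rewrite /= inordK. Qed.
Lemma tshare2 M k : tshare 2 M k = svec c2 M k.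
Proof. by rewrite /tshare /=; congr svec; apply: val_inj; rewrite /= inordK. Qed.
Lemma tshare_coded j M k i : (3 <= j)%N -> tshare j M k i = triple_code j i (svec i M k).
Proof. by rewrite leqNgt => /negbTE j_ge3; rewrite /tshare j_ge3 ffunE. Qed.

Lemma Fp2_neq0 : (2%:R : 'F_p) != 0. Proof. by apply: Fp_nat_neq0 => //; lia. Qed.
Lemma Fp3_neq0 : (3%:R : 'F_p) != 0. Proof. by apply: Fp_nat_neq0 => //; lia. Qed.
Lemma Fp4_neq0 : (4%:R : 'F_p) != 0. Proof. by apply: Fp_nat_neq0 => //; lia. Qed.

Definition triple_shift (j : nat) (M M' : Msg) : vec :=
  let d a b := M (a, b) - M' (a, b) in
  if j == 3%N then [ffun c => if c == c0 then 0 else if c == c1 then d o0 o0 else d o1 o1]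
  else if j == 4%N then
    (let e1 := d o0 o0 - d o1 o0 in let e2 := d o1 o1 - d o0 o1 in
     [ffun c => if c == c0 then (e1 + e2) / 2%:R else if c == c1 then (e1 - e2) / 2%:R
                else (e2 - e1) / 2%:R])
  else
    (let e1 := d o0 o1 - d o1 o0 - d o0 o0 in let e2 := - d o0 o1 - d o1 o1 in
     [ffun c => if c == c0 then (e1 + e2) / 2%:R else if c == c1 then 0 else (e1 - e2) / 2%:R]).

Lemma triple_code_secret (j : nat) (M M' : Msg) : (3 <= j < 6)%N ->
  exists2 tau : vec -> vec, injective tau &
    forall k i, triple_code j i (svec i M' (tau k)) = triple_code j i (svec i M k).
Proof.
case/andP=> j_ge3 j_lt6; exists (fun k => k + triple_shift j M M'); first exact: addIr.
have two_neq0 := Fp2_neq0.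
move=> k i; case: (I3_cases i) => ->;
do 6? [case: j j_ge3 j_lt6 => [|j] j_ge3 j_lt6 //];
rewrite /triple_code /triple_shift /= ?x00 ?x10 ?x11 ?x12 ?x20 ?x21 ?x22 !ffunE /=;
by field.
Qed.

(* Decoding certificate: for shares sa, sb, sc of A_a, A_b, A_c with
   a < b < c < 6, the entry M(r, s) as a linear combination of their
   coordinates (found by solving the 9 x 7 linear system in (M, k)). *)
Definition triple_entry (a b c r s : nat) (sa sb sc : vec) : 'F_p :=
  match a, b, c, r, s with
  | 0, 1, 2, 0, 0 => - sa c1 + sb c1
  | 0, 1, 2, 0, 1 => sa c0 - sc c0
  | 0, 1, 2, 1, 0 => sa c0 - sb c0
  | 0, 1, 2, 1, 1 => - sa c2 + sc c2
  | 0, 1, 3, 0, 0 => - sa c1 + sb c1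
  | 0, 1, 3, 0, 1 => - sa c2 + sb c2
  | 0, 1, 3, 1, 0 => sa c0 - sb c0
  | 0, 1, 3, 1, 1 => - sa c2 + sc c2
  | 0, 1, 4, 0, 0 => - sa c1 + sb c1
  | 0, 1, 4, 0, 1 => - sa c2 + sb c2
  | 0, 1, 4, 1, 0 => sa c0 - sb c0
  | 0, 1, 4, 1, 1 => - sa c0 - 2%:R * sa c2 + sb c2 + sc c2
  | 0, 1, 5, 0, 0 => - sa c1 + sb c1
  | 0, 1, 5, 0, 1 => - sa c2 + sb c2
  | 0, 1, 5, 1, 0 => sa c0 - sb c0
  | 0, 1, 5, 1, 1 => sa c0 - sb c2 - sc c2
  | 0, 2, 3, 0, 0 => - sa c1 + sc c1
  | 0, 2, 3, 0, 1 => sa c0 - sb c0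
  | 0, 2, 3, 1, 0 => - sa c1 + sb c1
  | 0, 2, 3, 1, 1 => - sa c2 + sb c2
  | 0, 2, 4, 0, 0 => - sa c0 - 2%:R * sa c1 + sb c1 + sc c1
  | 0, 2, 4, 0, 1 => sa c0 - sb c0
  | 0, 2, 4, 1, 0 => - sa c1 + sb c1
  | 0, 2, 4, 1, 1 => - sa c2 + sb c2
  | 0, 2, 5, 0, 0 => 2%:R * sa c0 + sa c2 - sb c0 - sb c1 - sc c1
  | 0, 2, 5, 0, 1 => sa c0 - sb c0
  | 0, 2, 5, 1, 0 => - sa c1 + sb c1
  | 0, 2, 5, 1, 1 => - sa c2 + sb c2
  | 0, 3, 4, 0, 0 => - sa c1 + sb c1
  | 0, 3, 4, 0, 1 => sa c0 + sb c2 - sc c2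
  | 0, 3, 4, 1, 0 => sa c0 + sb c1 - sc c1
  | 0, 3, 4, 1, 1 => - sa c2 + sb c2
  | 0, 3, 5, 0, 0 => - sa c1 + sb c1
  | 0, 3, 5, 0, 1 => sa c0 - sb c2 - sc c2
  | 0, 3, 5, 1, 0 => 2%:R * sa c0 + sa c2 - sb c1 - sb c2 - sc c1 - sc c2
  | 0, 3, 5, 1, 1 => - sa c2 + sb c2
  | 0, 4, 5, 0, 0 => 2%:R^-1 * sa c0 - sa c1 + 2%:R^-1 * sa c2 + 2%:R^-1 * sb c1 - 4%:R^-1 * sb c2 - 2%:R^-1 * sc c1 - 4%:R^-1 * sc c2
  | 0, 4, 5, 0, 1 => sa c0 - 2%:R^-1 * sb c2 - 2%:R^-1 * sc c2
  | 0, 4, 5, 1, 0 => (3%:R / 2%:R) * sa c0 + 2%:R^-1 * sa c2 - 2%:R^-1 * sb c1 - 4%:R^-1 * sb c2 - 2%:R^-1 * sc c1 - 4%:R^-1 * sc c2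
  | 0, 4, 5, 1, 1 => - sa c2 + 2%:R^-1 * sb c2 - 2%:R^-1 * sc c2
  | 1, 2, 3, 0, 0 => - sa c0 + sa c1 - sb c1 + sc c0
  | 1, 2, 3, 0, 1 => - sb c0 + sc c0
  | 1, 2, 3, 1, 0 => - sa c0 + sc c0
  | 1, 2, 3, 1, 1 => - sa c2 - sb c0 + sb c2 + sc c0
  | 1, 2, 4, 0, 0 => - 2%:R^-1 * sa c0 + sa c1 + 2%:R^-1 * sa c2 + 2%:R^-1 * sb c0 - 2%:R^-1 * sb c1 - 2%:R^-1 * sc c0
  | 1, 2, 4, 0, 1 => 2%:R^-1 * sa c0 + 2%:R^-1 * sa c2 - 2%:R^-1 * sb c0 + 2%:R^-1 * sb c1 - 2%:R^-1 * sc c0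
  | 1, 2, 4, 1, 0 => - 2%:R^-1 * sa c0 + 2%:R^-1 * sa c2 + 2%:R^-1 * sb c0 + 2%:R^-1 * sb c1 - 2%:R^-1 * sc c0
  | 1, 2, 4, 1, 1 => 2%:R^-1 * sa c0 - 2%:R^-1 * sa c2 - 2%:R^-1 * sb c0 + 2%:R^-1 * sb c1 + sb c2 - 2%:R^-1 * sc c0
  | 1, 2, 5, 0, 0 => sa c1 - sc c0
  | 1, 2, 5, 0, 1 => sa c0 - sb c0 + sb c1 - sc c0
  | 1, 2, 5, 1, 0 => sb c1 - sc c0
  | 1, 2, 5, 1, 1 => sa c0 - sa c2 + sb c1 - sc c0 - sc c2
  | 1, 3, 4, 0, 0 => sa c1 + sa c2 - sb c0 - sb c2 - sc c0 + sc c2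
  | 1, 3, 4, 0, 1 => sb c0 + sb c2 - sc c2
  | 1, 3, 4, 1, 0 => - sa c0 + sb c0
  | 1, 3, 4, 1, 1 => - sa c2 + sb c0 + 2%:R * sb c2 - sc c2
  | 1, 3, 5, 0, 0 => sa c1 - sc c0
  | 1, 3, 5, 0, 1 => sb c0 - sb c2 - sc c2
  | 1, 3, 5, 1, 0 => - sa c0 + sb c0
  | 1, 3, 5, 1, 1 => - sa c2 + sb c0 - sc c2
  | 1, 4, 5, 0, 0 => sa c1 - sc c0
  | 1, 4, 5, 0, 1 => sa c2 - sb c0 + sc c0
  | 1, 4, 5, 1, 0 => - sa c0 + sa c2 - sb c0 + 2%:R^-1 * sb c2 + sc c0 + 2%:R^-1 * sc c2
  | 1, 4, 5, 1, 1 => - sb c0 + 2%:R^-1 * sb c2 + sc c0 - 2%:R^-1 * sc c2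
  | 2, 3, 4, 0, 0 => - sa c1 + sb c0 + 2%:R * sb c1 - sc c1
  | 2, 3, 4, 0, 1 => - sa c0 + sb c0
  | 2, 3, 4, 1, 0 => sb c0 + sb c1 - sc c1
  | 2, 3, 4, 1, 1 => sa c1 + sa c2 - sb c0 - sb c1 - sc c0 + sc c1
  | 2, 3, 5, 0, 0 => sb c1 - sc c0
  | 2, 3, 5, 0, 1 => - sa c0 + sb c0
  | 2, 3, 5, 1, 0 => sa c1 - sc c0
  | 2, 3, 5, 1, 1 => - sa c1 + 2%:R * sb c0 - sb c1 + sc c0 - sc c1 - sc c2
  | 2, 4, 5, 0, 0 => - 3%:R^-1 * sa c0 + 3%:R^-1 * sa c1 + 3%:R^-1 * sb c0 + (2%:R / 3%:R) * sb c1 - (5%:R / 3%:R) * sc c0 - 3%:R^-1 * sc c1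
  | 2, 4, 5, 0, 1 => - (2%:R / 3%:R) * sa c0 + (2%:R / 3%:R) * sa c1 - 3%:R^-1 * sb c0 + 3%:R^-1 * sb c1 - 3%:R^-1 * sc c0 + 3%:R^-1 * sc c1
  | 2, 4, 5, 1, 0 => sa c1 - sc c0
  | 2, 4, 5, 1, 1 => sa c2 - sb c0 + sc c0
  | 3, 4, 5, 0, 0 => sa c1 - sc c0
  | 3, 4, 5, 0, 1 => sa c0 + sa c2 - sb c2
  | 3, 4, 5, 1, 0 => sa c0 + sa c1 - sb c1
  | 3, 4, 5, 1, 1 => sa c2 - sb c0 + sc c0
  | _, _, _, _, _ => 0
  end.


Definition triple_decode (a b c : nat) (sa sb sc : vec) : Msg :=
  [ffun rs : 'I_2 * 'I_2 => triple_entry a b c rs.1 rs.2 sa sb sc].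

Lemma triple_decodeK a b c M k : (a < b < c)%N -> (c < 6)%N ->
  triple_decode a b c (tshare a M k) (tshare b M k) (tshare c M k) = M.
Proof.
case/andP=> ab bc c_lt6; apply/ffunP => -[r s]; rewrite ffunE /=.
have := Fp2_neq0; have := Fp3_neq0; have := Fp4_neq0 => n4 n3 n2.
case: (I2_cases r) => ->; case: (I2_cases s) => ->;
do 6? [case: a ab => [|a] ab //];
do 6? [case: b ab bc => [|b] ab bc //];
do 6? [case: c bc c_lt6 => [|c] bc c_lt6 //];
rewrite /triple_entry /= ?tshare0 ?tshare1 ?tshare2 ?tshare_coded //
  /triple_code /= ?x00 ?x10 ?x11 ?x12 ?x20 ?x21 ?x22.
all: by field; rewrite ?n2 ?n3 ?n4.
Qed.

Lemma triple_decodable (m : nat) (X : {set 'I_m}) : (m <= 6)%N -> #|X| = 3%N ->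
  exists D : {ffun 'I_m -> vec} -> Msg,
    forall M k, D [ffun j => if j \in X then share triple_code j M k else 0] = M.
Proof.
move=> m_le6 cardX.
have [a [b [c [ab bc ->]]]] := card3_sorted cardX.
exists (fun s => triple_decode a b c (s a) (s b) (s c)) => M k.
rewrite !ffunE !inE !eqxx ?orbT !share_tshare.
by apply: triple_decodeK; [rewrite ab | apply: leq_trans (ltn_ord c) m_le6].
Qed.
End TripleScheme.

Close Scope ring_scope.

Theorem pair_rate_achievable (p m : nat) : prime p -> (2 < m)%N -> (m < p)%N ->
  ccn_secure_rate_achievable m 2 (Rdiv (INR (1 ^ 2)) (INR 2)).
Proof.
move=> p_pr m_gt2 m_lt_p; apply: (@sharing_rate_achievable p 1 m p_pr (@pair_code p)).
  move=> j j_ge2 M M'; apply: pair_code_secret => //.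
  by rewrite j_ge2 (ltn_trans (ltn_ord j) m_lt_p).
by move=> X cardX; apply: pair_decodable => //; apply: ltnW.
Qed.

Theorem diag_rate_achievable (p n : nat) : prime p -> (1 < n)%N -> (n < p)%N ->
  ccn_secure_rate_achievable n.+2 n.+1 (Rdiv (INR (n ^ 2)) (INR n.+1)).
Proof.
move=> p_pr n_gt1 n_lt_p.
apply: (@sharing_rate_achievable p n n.+2 p_pr (@diag_code p n)).
  by move=> j _ M M'; apply: diag_code_secret.
move=> X cardX; apply: diag_decodable cardX; apply: Fp_nat_neq0 => //; lia.
Qed.

Theorem triple_rate_achievable (p m : nat) : prime p -> (4 < m <= 6)%N -> (m < p)%N ->
  ccn_secure_rate_achievable m 3 (Rdiv (INR (2 ^ 2)) (INR 3)).
Proof.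
move=> p_pr /andP [m_gt4 m_le6] m_lt_p; have p_gt5 : (5 < p)%N by lia.
apply: (@sharing_rate_achievable p 2 m p_pr (@triple_code p)).
  move=> j j_ge3 M M'; apply: triple_code_secret => //.
  by rewrite j_ge3 (leq_trans (ltn_ord j) m_le6).
by move=> X cardX; apply: triple_decodable.
Qed.

Theorem lemma1 (m h : nat) :
  (h = 2 /\ (3 <= m)%N) \/ ((2 <= h)%N /\ m = h.+1) \/
  (h = 3 /\ (m = 4 \/ m = 5 \/ m = 6)) ->
  ccn_secure_rate_achievable m h (Rdiv (INR ((h - 1) ^ 2)) (INR h)).
Proof.
have [p m_lt_p p_pr] := prime_above m.
case=> [[-> m_ge3]|[[h_ge2 Em]|[-> m_456]]].
- exact: pair_rate_achievable p_pr m_ge3 m_lt_p.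
- subst m; case: h h_ge2 m_lt_p => [|[|[|n]]] // _ m_lt_p.
    exact: pair_rate_achievable p_pr (isT : (2 < 3)%N) m_lt_p.
  by rewrite subn1; apply: diag_rate_achievable p_pr _ (ltn_trans _ m_lt_p).
- case: m_456 m_lt_p => [->|m_56] m_lt_p.
    by apply: (diag_rate_achievable (n := 2)) p_pr _ (ltn_trans _ m_lt_p).
  by apply: triple_rate_achievable p_pr _ m_lt_p; case: m_56 => ->.
Qed.
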